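(* For any oriented graph $G$, $\omega_{ro}(G) \leq \chi^*_o(G) \leq \chi_o(G)$.
   Context: An oriented graph is a finite directed graph with no directed cycle of length 1 or 2. A homomorphism of an oriented graph $G$ to an oriented graph $H$ is a map $f:V(G)\to V(H)$ such that $f(x)f(y)$ is an arc of $H$ whenever $xy$ is an arc of $G$. An oriented relative clique of $G$ is a set $R\subseteq V(G)$ such that $f(x)\neq f(y)$ for every homomorphism $f$ of $G$ to any oriented graph and all distinct $x,y\in R$; $\omega_{ro}(G)$ is the maximum size of an oriented relative clique. For a set $S$ of $k$ colors, a $b$-fold oriented $k$-coloring of $G$ is a map $f$ from $V(G)$ to the $b$-element subsets of $S$ such that (i) $f(x)\cap f(y)=\emptyset$ for every arc $xy$, and (ii) for all arcs $xy, zw$, $f(x)\cap f(w)\neq\emptyset$ implies $f(y)\cap f(z)=\emptyset$. $\chi^b_o(G)$ is the minimum $k$ admitting such a coloring; $\chi_o(G)=\chi^1_o(G)$ is the oriented chromatic number, and $\chi^*_o(G)=\lim_{b\to\infty}\chi^b_o(G)/b=\inf_{b\ge1}\chi^b_o(G)/b$ is the fractional oriented chromatic number. *)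

From HB Require Import structures.
From mathcomp Require Import all_boot all_order all_algebra.
From mathcomp Require Import boolp classical_sets reals.
Set Implicit Arguments. Unset Strict Implicit. Unset Printing Implicit Defensive.
Import Order.TTheory GRing.Theory Num.Theory.

Definition oriented (V : finType) (a : rel V) : Prop :=
  (forall x, ~~ a x x) /\ (forall x y, a x y -> ~~ a y x).

Definition is_hom (V W : finType) (a : rel V) (h : rel W) (f : V -> W) : Prop :=
  forall x y, a x y -> h (f x) (f y).

Definition oriented_relative_clique (V : finType) (a : rel V) (R : {set V}) : Prop :=
  forall (W : finType) (h : rel W), oriented h ->
  forall f : V -> W, is_hom a h f ->
  forall x y, x \in R -> y \in R -> x != y -> f x != f y.

Definition omega_ro (V : finType) (a : rel V) : nat :=
  \max_(R : {set V} | `[< oriented_relative_clique a R >]) #|R|.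

Definition bfold_oriented_coloring (V : finType) (a : rel V) (b k : nat)
    (f : V -> {set 'I_k}) : Prop :=
  (forall x, #|f x| = b) /\
  (forall x y, a x y -> [disjoint f x & f y]) /\
  (forall x y z w, a x y -> a z w -> ~~ [disjoint f x & f w] ->
     [disjoint f y & f z]).

Local Open Scope ring_scope.
Local Open Scope classical_set_scope.

Definition chi_b (R : realType) (V : finType) (a : rel V) (b : nat) : R :=
  inf [set (k%:R : R) | k in
        [set k : nat | exists f : V -> {set 'I_k}, bfold_oriented_coloring a b f]].

Definition chi_o (R : realType) (V : finType) (a : rel V) : R := chi_b R a 1.

Definition chi_star (R : realType) (V : finType) (a : rel V) : R :=
  inf [set chi_b R a b / b%:R | b in [set b : nat | (1 <= b)%N]].

(* Lower bound: if a b-fold oriented k-colouring f is given and x, y lie in an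
   oriented relative clique, then f x and f y are disjoint.  Otherwise some
   colour c is shared, and choosing one representative colour per vertex, c for
   both x and y, maps the graph homomorphically onto an oriented graph on the
   colours (the conditions on a colouring are exactly what makes that colour
   graph oriented), identifying x and y.  So a clique of size w needs w b
   distinct colours, giving w <= k / b for every b.  Upper bound: take b = 1. *)
From mathcomp Require Import all_boot all_order all_algebra.
From mathcomp Require Import boolp classical_sets reals.
Set Implicit Arguments. Unset Strict Implicit. Unset Printing Implicit Defensive.
Import Order.TTheory GRing.Theory Num.Theory.
Local Open Scope ring_scope.

Lemma bfold_coloring_exists (V : finType) (a : rel V) (b : nat) :
  oriented a -> exists k (f : V -> {set 'I_k}), bfold_oriented_coloring a b f.
Proof.
move=> [a_irr a_asym].
pose f x : {set 'I_#|{: V * 'I_b}|} := [set enum_rank (x, j) | j : 'I_b].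
have f_meet x y : ~~ [disjoint f x & f y] -> x = y.
  rewrite -setI_eq0 => /set0Pn [c]; rewrite inE.
  by case/andP => /imsetP [j _ ->] /imsetP [j' _] /enum_rank_inj [].
exists _, f; split; [|split].
- move=> x; rewrite card_imset ?card_ord //.
  by move=> j j' /enum_rank_inj [].
- move=> x y axy; apply: contraT => /f_meet exy.
  by rewrite exy (negbTE (a_irr y)) in axy.
- move=> x y z w axy azw /f_meet exw; apply: contraT => /f_meet eyz.
  by move: (a_asym _ _ axy); rewrite exw eyz azw.
Qed.

Lemma disjoint_family_card_leq (T I : finType) (S : {set I}) (F : I -> {set T})
    (b : nat) :
  (0 < b)%N -> {in S, forall i, #|F i| = b} ->
  {in S &, forall i j, j != i -> [disjoint F i & F j]} ->
  (#|S| * b <= #|T|)%N.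
Proof.
move=> b_gt0 cardF disjF.
have F_neq0 : finset.set0 \notin F @: S.
  apply/imsetP => [[i Si F0]].
  by move: (cardF i Si); rewrite -F0 cards0 => b0; rewrite -b0 in b_gt0.
have [/eqnP cover_card F_inj] := trivIimset disjF F_neq0.
apply: leq_trans (max_card (finset.cover (F @: S))).
rewrite -cover_card big_imset //= (eq_bigr (fun=> b)); last exact: cardF.
by rewrite sum_nat_const.
Qed.

Section ColourGraph.

Variables (V : finType) (a : rel V) (b k : nat) (f : V -> {set 'I_k}).
Hypothesis f_col : bfold_oriented_coloring a b f.
Variable g : V -> 'I_k.
Hypothesis g_in : forall v, g v \in f v.

Definition colour_arc : rel 'I_k :=
  fun i j => [exists u, exists v, [&& a u v, g u == i & g v == j]].

Lemma colour_arcP i j :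
  reflect (exists u v, [/\ a u v, g u = i & g v = j]) (colour_arc i j).
Proof.
apply: (iffP existsP) => [[u /existsP [v /and3P [auv /eqP gu /eqP gv]]] |
                          [u [v [auv gu gv]]]].
  by exists u, v.
by exists u; apply/existsP; exists v; rewrite auv gu gv !eqxx.
Qed.

Lemma colour_arc_oriented : oriented colour_arc.
Proof.
have [_ [arc_disj arc_cross]] := f_col.
split.
- move=> i; apply/colour_arcP => [[u [v [auv gu gv]]]].
  by move: (disjointFr (arc_disj _ _ auv) (g_in u)); rewrite gu -gv g_in.
- move=> i j /colour_arcP [u [v [auv gu gv]]].
  apply/colour_arcP => [[z [w [azw gz gw]]]].
  have uw_meet : ~~ [disjoint f u & f w].
    by apply: contraL (g_in w) => /disjointFr ->; rewrite // gw -gu g_in.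
  move: (disjointFr (arc_cross _ _ _ _ auv azw uw_meet) (g_in v)).
  by rewrite gv -gz g_in.
Qed.

Lemma colour_arc_hom : is_hom a colour_arc g.
Proof. by move=> u v auv; apply/colour_arcP; exists u, v. Qed.

End ColourGraph.

Lemma relative_clique_disjoint_colours (V : finType) (a : rel V) (b k : nat)
    (f : V -> {set 'I_k}) (S : {set V}) :
  (0 < b)%N -> bfold_oriented_coloring a b f -> oriented_relative_clique a S ->
  {in S &, forall x y, y != x -> [disjoint f x & f y]}.
Proof.
move=> b_gt0 f_col S_clique x y xS yS nyx; apply: contraT.
rewrite -setI_eq0 => /set0Pn [c]; rewrite inE => /andP [cx cy].
have f_nonempty v : exists i, i \in f v.
  by apply/card_gt0P; have [-> _] := f_col.
pose g v := if c \in f v then c else xchoose (f_nonempty v).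
have g_in v : g v \in f v.
  by rewrite /g; case: ifP => // _; apply: xchooseP.
have := S_clique _ _ (colour_arc_oriented f_col g_in) g
  (colour_arc_hom (a := a) g) y x yS xS nyx.
by rewrite /g cx cy eqxx.
Qed.

Lemma omega_ro_mul_leq (V : finType) (a : rel V) (b k : nat)
    (f : V -> {set 'I_k}) :
  bfold_oriented_coloring a b f -> (omega_ro a * b <= k)%N.
Proof.
move=> f_col; have [-> | b_gt0] := posnP b; first by rewrite muln0.
rewrite -leq_divRL //; apply/bigmax_leqP => S /asboolP S_clique.
rewrite leq_divRL // -[k]card_ord.
apply: (disjoint_family_card_leq b_gt0).
  by have [f_card _] := f_col; move=> x _; apply: f_card.
exact: relative_clique_disjoint_colours b_gt0 f_col S_clique.
Qed.

Lemma chi_b_ge (R : realType) (V : finType) (a : rel V) (b m : nat) :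
  oriented a ->
  (forall k (f : V -> {set 'I_k}), bfold_oriented_coloring a b f -> (m <= k)%N) ->
  (m%:R : R) <= chi_b R a b.
Proof.
move=> a_or m_le; apply: lb_le_inf.
  have [k [f f_col]] := bfold_coloring_exists b a_or.
  by exists k%:R, k => //; exists f.
by move=> _ [k [f f_col] <-]; rewrite ler_nat; apply: m_le f_col.
Qed.

Theorem theorem3 (R : realType) (V : finType) (a : rel V) :
  oriented a ->
  (omega_ro a)%:R <= chi_star R a /\ chi_star R a <= chi_o R a.
Proof.
move=> a_or; split.
- apply: lb_le_inf; first by exists (chi_b R a 1 / 1%:R), 1%N.
  move=> _ [b /= b_gt0 <-].
  rewrite ler_pdivlMr ?ltr0n // -natrM.
  by apply: chi_b_ge => // k f; apply: omega_ro_mul_leq.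
- apply: ge_inf; last by exists 1%N => //; rewrite divr1.
  exists 0 => _ [b /= _ <-]; rewrite divr_ge0 //.
  exact: (@chi_b_ge R V a b 0 a_or (fun _ _ _ => leq0n _)).
Qed.
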